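(* Let $M=\bigoplus_{l=1}^rM(l)^{\oplus a_l}$ be a representation of the equioriented quiver $\Gamma$ of type $A_n$ with $M(1),\dots,M(r)$ pairwise non-isomorphic indecomposables, $N=a_1+\cdots+a_r$, and let $P\subseteq GL_N$ be the image of $\mathcal{P}_M$ under the embedding $\mathrm{Aut}_\Gamma(R)\hookrightarrow GL_N$ described below. Then $M$ is catenoid if and only if $P$ is a parabolic subgroup of $GL_N$. In this case (with $M(1)<M(2)<\cdots<M(r)$ and the summands indexed so that $M_1,\dots,M_{a_1}\cong M(1)$, the next $a_2$ isomorphic to $M(2)$, etc.), $P$ is the standard parabolic subgroup of $GL_N$ associated with the partition $N=a_1+\cdots+a_r$ (block upper triangular matrices with diagonal blocks of sizes $a_1,\dots,a_r$), with Levi decomposition $P=LU$ ($L$ the block-diagonal subgroup, $U$ the unipotent radical); and, transporting $\Psi$ to $P$, the restriction of $\Psi$ to $L$ is an isomorphism onto $L(M)$ and $\Psi(U)=U(M)$.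
   Context: $\Gamma$ is the quiver $1\to2\to\cdots\to n$; representations are finite-dimensional over $\mathbb{C}$; $M[i,j]$ is the indecomposable supported on $[i,j]$; $M[i,j]\le M[k,\ell]$ iff $i\le k$ and $j\le\ell$; $M$ is catenoid if its pairwise non-isomorphic indecomposable summands are totally ordered by $\le$ (equivalently lie on an oriented path of the Auslander--Reiten quiver). Let $0\to Q\xrightarrow{\iota}R\xrightarrow{\pi}M\to0$ be the minimal projective resolution, $\mathcal{P}_M=\{f\in\mathrm{Aut}_\Gamma(R)\mid f\circ\iota=\iota\}$, and $\Psi:\mathcal{P}_M\to\mathrm{Aut}_\Gamma(M)$, $\Psi(f)(m)=\pi(f(x))$ for $x\in\pi^{-1}(m)$. Write $M=M_1\oplus\cdots\oplus M_N$ with $M_i$ indecomposable, and let $P^i$ be the projective cover of $M_i$, so $R=P^1\oplus\cdots\oplus P^N$, indexed so that $P^1\le\cdots\le P^N$ (in the catenoid case, with $M_1\le\cdots\le M_N$). Let $\rho_{ij}$ be a generator of $\mathrm{Hom}_\Gamma(P^j,P^i)$ (dimension at most one), $\Omega=\{(i,j)\mid\rho_{ij}\ne0\}$; the embedding $\mathrm{Aut}_\Gamma(R)\to GL_N$ sends $\sum_{(i,j)\in\Omega}b_{ij}\rho_{ij}$ to $\sum b_{ij}E_{ij}$. For each $i,j$ fix $\phi_{i,j}\in\mathrm{Hom}_\Gamma(M_j,M_i)$, nonzero if this space is nonzero, viewed in $\mathrm{End}_\Gamma(M)$. $L(M)=\prod_l\mathrm{Aut}_\Gamma(M(l)^{\oplus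 a_l})$ and $U(M)$ is the subgroup of $\mathrm{Aut}_\Gamma(M)$ generated by $\exp(z\phi_{i,j})$, $z\in\mathbb{C}$, for $M_i\not\cong M_j$. *)

From HB Require Import structures.
From mathcomp Require Import all_boot all_order all_algebra.
Unset Printing Implicit Defensive.
Import Order.TTheory GRing.Theory Num.Theory.
Local Open Scope ring_scope.

(* A representation is a family of vector spaces V_k = C^(vtx k) (k : nat,   *)
(* only the vertices 1..n will be nonempty for the representations used)     *)
(* together with linear maps V_k -> V_(k+1) given by their coefficient       *)
(* matrices, in the row-vector convention:                                   *)
(*   arr k x y = coefficient of basis vector y of V_(k+1) in the image of    *)
(*               basis vector x of V_k.                                      *)
Section Reps.
Context {C : fieldType}.

Record rep := Rep { vtx : nat -> finType ; arr : forall k, vtx k -> vtx k.+1 -> C }.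

(* linear maps V -> W, vertexwise, same row convention *)
Definition homf (V W : rep) := forall k, vtx V k -> vtx W k -> C.

Definition is_hom {V W : rep} (f : homf V W) : Prop :=
  forall k (x : vtx V k) (y : vtx W k.+1),
    \sum_(z : vtx W k) f k x z * arr W k z y
    = \sum_(z : vtx V k.+1) arr V k x z * f k.+1 z y.

(* functional composition: hcomp f g = f o g *)
Definition hcomp {U V W : rep} (f : homf V W) (g : homf U V) : homf U W :=
  fun k x y => \sum_(z : vtx V k) g k x z * f k z y.

Definition hid (V : rep) : homf V V := fun k x y => (x == y)%:R.

Definition hscale {V W : rep} (c : C) (f : homf V W) : homf V W :=
  fun k x y => c * f k x y.

Definition is_aut {V : rep} (f : homf V V) : Prop :=
  is_hom f /\ exists g : homf V V, is_hom g /\ hcomp f g = hid V /\ hcomp g f = hid V.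

(* for a nilpotent f with f^K = 0 this is exp(f)                             *)
Fixpoint hpow {V : rep} (f : homf V V) (m : nat) : homf V V :=
  if m is m'.+1 then hcomp f (hpow f m') else hid V.

Definition hexp_trunc {V : rep} (K : nat) (f : homf V V) : homf V V :=
  fun k x y => \sum_(m < K) (m`!%:R)^-1 * hpow f m k x y.

Definition is_aut_subgroup {V : rep} (H : homf V V -> Prop) : Prop :=
  [/\ (forall h, H h -> is_aut h), H (hid V),
      (forall f g, H f -> H g -> H (hcomp f g)) &
      (forall f, H f -> exists g, H g /\ hcomp f g = hid V)].

Definition gen_aut_subgroup {V : rep} (S : homf V V -> Prop) (g : homf V V) : Prop :=
  forall H, is_aut_subgroup H -> (forall h, S h -> H h) -> H g.

(* Direct sums of interval modules:  isum s t = (+)_(i<N) M[s i, t i], where *)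
(* M[a,b] has C at the vertices a <= k <= b and identity maps between them.  *)
(* The basis of the vertex space at k is {i : 'I_N | s i <= k <= t i}.        *)
(* (If t i < s i the summand is 0.)                                          *)
Definition isum_vtx {N : nat} (s t : 'I_N -> nat) (k : nat) : finType :=
  {i : 'I_N | (s i <= k <= t i)%N}.

Definition isum {N : nat} (s t : 'I_N -> nat) : rep :=
  @Rep (isum_vtx s t) (fun k x y => (sval x == sval y)%:R).

(* The setting of the proposition.  The summands are M_i = M[sM i, tM i]     *)
(* (i < N).  The minimal projective resolution 0 -> Q -> R -> M -> 0:        *)
(*  P^i = M[sM i, n] is the projective cover of M_i, R = (+)_i P^i,          *)
(*  Q = (+)_i M[tM i + 1, n] (the summand is 0 when tM i = n),               *)
Section Setting.
Variables (n N : nat) (sM tM : 'I_N -> nat).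

Definition Mrep : rep := isum sM tM.
Definition Rrep : rep := isum sM (fun _ => n).
Definition Qrep : rep := isum (fun i => (tM i).+1) (fun _ => n).

Definition iota_res : homf Qrep Rrep := fun k x y => (sval x == sval y)%:R.
Definition pi_res : homf Rrep Mrep := fun k x y => (sval x == sval y)%:R.
(* a vertexwise linear section of pi_res (used to pick x in pi^-1(m)) *)
Definition sec_res : homf Mrep Rrep := fun k x y => (sval x == sval y)%:R.

Definition PM (f : homf Rrep Rrep) : Prop :=
  is_aut f /\ exists g : homf Qrep Qrep, is_aut g /\ hcomp f iota_res = hcomp iota_res g.

(* Psi(f)(m) = pi(f(x)) for x in pi^-1(m) *)
Definition Psi (f : homf Rrep Rrep) : homf Mrep Mrep :=
  hcomp pi_res (hcomp f sec_res).

(* rho i j : P^j -> P^i, generator of Hom(P^j, P^i) (nonzero iff sM i <= sM j),*)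
(* viewed in End(R) : sends the basis vector of P^j to that of P^i.           *)
Definition rho (i j : 'I_N) : homf Rrep Rrep :=
  fun k x y => ((sval x == j) && (sval y == i))%:R.

Definition Omega (i j : 'I_N) : bool := (sM i <= sM j)%N.

(* inverse of the embedding Aut(R) -> GL_N : B |-> sum_(i,j) in Omega B_ij rho_ij *)
Definition emb_inv (B : 'M[C]_N) : homf Rrep Rrep :=
  fun k x y => \sum_(i < N) \sum_(j < N | Omega i j) B i j * rho i j k x y.

Definition Pimg (B : 'M[C]_N) : Prop :=
  (forall i j, ~~ Omega i j -> B i j = 0) /\ PM (emb_inv B).

End Setting.

(* closedness is automatic for subgroups of GL_N containing a Borel.)        *)
Definition mx_subgroup {N : nat} (P : 'M[C]_N -> Prop) : Prop :=
  [/\ (forall B, P B -> B \in unitmx), P 1%:M,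
      (forall A B, P A -> P B -> P (A *m B)) &
      (forall A, P A -> P (invmx A))].

Definition upper_borel {N : nat} (B : 'M[C]_N) : Prop :=
  B \in unitmx /\ (forall i j : 'I_N, (j < i)%N -> B i j = 0).

Definition parabolic {N : nat} (P : 'M[C]_N -> Prop) : Prop :=
  mx_subgroup P /\
  exists g : 'M[C]_N, g \in unitmx /\
    forall B, upper_borel B -> P (g *m B *m invmx g).

End Reps.
Arguments rep : clear implicits.
Arguments isum C {N}.
Arguments Mrep C {N}.
Arguments Rrep C n {N}.
Arguments Qrep C n {N}.
Arguments iota_res C n {N} sM tM k _ _.
Arguments pi_res C n {N} sM tM k _ _.
Arguments sec_res C n {N} sM tM k _ _.
Arguments PM C n {N} sM tM f.
Arguments Psi C n {N} sM tM f k _ _.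
Arguments rho C n {N} sM i j k _ _.
Arguments Omega {N} sM i j.
Arguments emb_inv C n {N} sM B k _ _.
Arguments Pimg C n {N} sM tM B.

(* (0-based: number of complete blocks lying before position i).             *)
Definition block_idx {r : nat} (a : 'I_r -> nat) (i : nat) : nat :=
  (\sum_(l < r) ((\sum_(l' < r | (l' <= l)%N) a l') <= i))%N.

Section Parabolics.
Context {C : fieldType} {r N : nat}.
Variable a : 'I_r -> nat.

Definition std_parabolic (B : 'M[C]_N) : Prop :=
  B \in unitmx /\
  forall i j : 'I_N, (block_idx a j < block_idx a i)%N -> B i j = 0.

Definition std_levi (B : 'M[C]_N) : Prop :=
  B \in unitmx /\
  forall i j : 'I_N, block_idx a i != block_idx a j -> B i j = 0.

Definition std_unip (B : 'M[C]_N) : Prop :=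
  (forall i j : 'I_N, (block_idx a j < block_idx a i)%N -> B i j = 0) /\
  (forall i j : 'I_N, block_idx a i = block_idx a j -> B i j = (i == j)%:R).
End Parabolics.

Definition iv_le (i j k l : nat) : bool := (i <= k)%N && (j <= l)%N.

Definition catenoid {r : nat} (s t : 'I_r -> nat) : Prop :=
  forall l l' : 'I_r, iv_le (s l) (t l) (s l') (t l') || iv_le (s l') (t l') (s l) (t l).

(* The subgroups L(M) and U(M) of Aut(M), for M = (+)_(i<N) M_i with          *)
(* M_i = M[sM i, tM i] isomorphic to M(typ i).                                *)
Section LU.
Context {C : fieldType} {N r : nat} {sM tM : 'I_N -> nat}.
Variable typ : 'I_N -> 'I_r.

(* a morphism of M lying in Hom(M_j, M_i) (viewed in End(M)) *)
Definition supported_in (j i : 'I_N) (f : homf (Mrep C sM tM) (Mrep C sM tM)) : Prop :=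
  forall k (x y : vtx (Mrep C sM tM) k), f k x y != 0 -> sval x = j /\ sval y = i.

(* L(M) = prod_l Aut(M(l)^(a_l)) : automorphisms preserving each isotypic    *)
(* component M(l)^(a_l)                                                      *)
Definition LM (g : homf (Mrep C sM tM) (Mrep C sM tM)) : Prop :=
  is_aut g /\
  forall k (x y : vtx (Mrep C sM tM) k), typ (sval x) != typ (sval y) -> g k x y = 0.

(* phi_ij is nilpotent and every vertex space of M has dimension <= N, so     *)
(* the exponential series truncated at N+1 terms is exp.                     *)
Definition UM (phi : 'I_N -> 'I_N -> homf (Mrep C sM tM) (Mrep C sM tM))
    (g : homf (Mrep C sM tM) (Mrep C sM tM)) : Prop :=
  gen_aut_subgroup
    (fun h => exists (i j : 'I_N) (z : C),
         typ i != typ j /\ h = hexp_trunc N.+1 (hscale z (phi i j))) g.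
End LU.

(* Every endomorphism of a direct sum of interval modules M[s_i, t_i] is given by a
   matrix B whose entry B_ij can be nonzero only if s_i <= s_j and t_i <= t_j.  Hence
   the automorphisms of R preserving iota(Q) are exactly the invertible matrices
   supported on the interval order of the summands of M, and Psi sends such a matrix to
   the automorphism of M it defines.  A group of invertible matrices supported on a
   preorder contains a conjugate of the upper triangular Borel subgroup iff the preorder
   is total: conjugate by a permutation sorting a linear extension; conversely, the
   conjugates of the elements 1 + E_ab detect every pair of indices.  In the catenoid
   case the preorder is the block order, so P is the standard parabolic subgroup; its
   block diagonal matrices are sent isomorphically onto L(M), and its unipotent radical
   is a product of elementary matrices 1 + c E_pm, p in an earlier block than m, which
   are the images of the exponentials exp(z phi_pm). *)

From HB Require Import structures.
From mathcomp Require Import all_boot all_order all_algebra.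
From mathcomp Require Import fingroup perm zify.
From Stdlib Require Import FunctionalExtensionality.
Import Order.TTheory GRing.Theory Num.Theory.
Local Open Scope ring_scope.

Lemma sum_mul_delta {F : fieldType} {I : finType} (P : pred I) (G : I -> F) y :
  \sum_(i | P i) G i * (i == y)%:R = if P y then G y else 0.
Proof.
rewrite big_mkcond (bigD1 y) //= big1 ?addr0; first by case: (P y); rewrite ?eqxx ?mulr1.
by move=> i /negbTE ->; case: (P i); rewrite ?mulr0.
Qed.

Lemma sum_delta_mul {F : fieldType} {I : finType} (P : pred I) (G : I -> F) y :
  \sum_(i | P i) (y == i)%:R * G i = if P y then G y else 0.
Proof. by rewrite -sum_mul_delta; apply: eq_bigr => i _; rewrite mulrC eq_sym. Qed.

Section Homs.
Context {F : fieldType}.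
Implicit Types V W : rep F.

Lemma homf_ext V W (f g : homf V W) : (forall k x y, f k x y = g k x y) -> f = g.
Proof.
move=> fg; apply: functional_extensionality_dep => k.
by do 2![apply: functional_extensionality => ?]; apply: fg.
Qed.

Lemma hcompf1 V W (f : homf V W) : hcomp f (hid V) = f.
Proof. by apply: homf_ext => k x y; rewrite /hcomp (sum_delta_mul xpredT). Qed.

Lemma hcompf0 U V W (f : homf V W) :
  hcomp f (fun k (_ : vtx U k) (_ : vtx V k) => 0) = (fun _ _ _ => 0).
Proof. by apply: homf_ext => k x y; rewrite /hcomp big1 // => z _; rewrite mul0r. Qed.

Lemma hexp_trunc_sqr0 V (f : homf V V) K : (1 < K)%N ->
  hcomp f f = (fun _ _ _ => 0) -> hexp_trunc K f = fun k x y => hid V k x y + f k x y.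
Proof.
case: K => [|[|K]] // _ ff0.
have pow0 m : hpow f m.+2 = (fun _ _ _ => 0).
  elim: m => [|m IH]; first by rewrite /= hcompf1.
  by rewrite -[hpow f m.+3]/(hcomp f (hpow f m.+2)) IH hcompf0.
apply: homf_ext => k x y; rewrite /hexp_trunc 2!big_ord_recl big1 => [|m _].
  by rewrite /= hcompf1 invr1 !mul1r addr0.
by rewrite -[hpow f _]/(hpow f m.+2) pow0 mulr0.
Qed.

End Homs.

Lemma invmx_horner {F : fieldType} {n : nat} {A : 'M[F]_n.+1} : A \in unitmx ->
  exists p : {poly F}, invmx A = horner_mx A p.
Proof.
move=> uA; set c := char_poly A.
have c0 : c`_0 != 0.
  by rewrite char_poly_det mulf_eq0 signr_eq0 -unitfE -unitmxE uA.
have take1 : take_poly 1 c = (c`_0)%:P.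
  by apply/polyP => -[|i]; rewrite coef_take_poly coefC.
pose q := - (c`_0)^-1 *: drop_poly 1 c; exists q.
have qA : horner_mx A q *m A = 1%:M.
  have := Cayley_Hamilton A; rewrite -/c -(poly_take_drop 1 c) take1 expr1.
  rewrite rmorphD rmorphM /= horner_mx_C horner_mx_X => /eqP.
  rewrite addrC addr_eq0 => /eqP CH.
  by rewrite /q linearZ /= -scalemxAl mulmxE CH scaleNr scalerN opprK scale_scalar_mx mulVf.
by rewrite -[invmx A]mul1mx -qA -mulmxA mulmxV // mulmx1.
Qed.

Section MatrixSupport.
Context {F : fieldType} {N : nat}.
Implicit Types (r : rel 'I_N) (A B : 'M[F]_N).

Definition mx_supp r A : Prop := forall i j, ~~ r i j -> A i j = 0.

Lemma mx_supp_nz {r A i j} : mx_supp r A -> A i j != 0 -> r i j.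
Proof. by move=> rA; apply: contraR => /rA ->. Qed.

Lemma mx_supp_sub {r r' A} : subrel r r' -> mx_supp r A -> mx_supp r' A.
Proof. by move=> rr' rA i j /(contra (@rr' i j)); apply: rA. Qed.

Lemma mx_supp1 {r} : reflexive r -> mx_supp r 1%:M.
Proof. by move=> rr i j; rewrite mxE; case: eqVneq => // ->; rewrite rr. Qed.

Lemma mx_suppD {r A B} : mx_supp r A -> mx_supp r B -> mx_supp r (A + B).
Proof. by move=> rA rB i j rij; rewrite mxE rA ?rB ?addr0. Qed.

Lemma mx_suppN {r A} : mx_supp r A -> mx_supp r (- A).
Proof. by move=> rA i j rij; rewrite mxE rA ?oppr0. Qed.

Lemma mx_suppZ {r c A} : mx_supp r A -> mx_supp r (c *: A).
Proof. by move=> rA i j rij; rewrite mxE rA ?mulr0. Qed.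

Lemma mx_supp_delta {r i j} : r i j -> mx_supp r (delta_mx i j).
Proof.
by move=> rij i' j'; rewrite mxE; case: eqP => [-> | //]; case: eqP => [-> | //]; rewrite rij.
Qed.

Lemma mx_suppM {r1 r2 r A B} : (forall i k j, r1 i k -> r2 k j -> r i j) ->
  mx_supp r1 A -> mx_supp r2 B -> mx_supp r (A *m B).
Proof.
move=> r12 r1A r2B i j rij; rewrite mxE big1 // => k _.
have [r1ik | /r1A-> ] := boolP (r1 i k); last by rewrite mul0r.
have [r2kj | /r2B-> ] := boolP (r2 k j); last by rewrite mulr0.
by rewrite (r12 _ _ _ r1ik r2kj) in rij.
Qed.

Lemma mx_suppMt {r A B} : transitive r -> mx_supp r A -> mx_supp r B -> mx_supp r (A *m B).
Proof. by move=> tr; apply: mx_suppM => i k j rik rkj; apply: tr rkj. Qed.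

End MatrixSupport.

Lemma mx_supp_inv {F : fieldType} {N} {r : rel 'I_N} {A : 'M[F]_N} :
  reflexive r -> transitive r -> mx_supp r A -> A \in unitmx -> mx_supp r (invmx A).
Proof.
case: N r A => [|N] r A rr tr rA uA; first by move=> [].
have [p ->] := invmx_horner uA; elim/poly_ind: p => [|p c IH].
  by rewrite rmorph0 => i j; rewrite mxE.
rewrite rmorphD rmorphM /= horner_mx_X horner_mx_C -mulmxE.
by apply: mx_suppD; [apply: mx_suppMt | rewrite -scalemx1; apply/mx_suppZ/mx_supp1].
Qed.

Lemma upper_unitmx {F : fieldType} {N : nat} (A : 'M[F]_N) :
  (forall i j : 'I_N, (j < i)%N -> A i j = 0) -> (forall i, A i i != 0) -> A \in unitmx.
Proof.
move=> lowA diagA; have trigA : is_trig_mx A^T by apply/is_trig_mxP => i j ji; rewrite mxE lowA.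
rewrite unitmxE -det_tr det_trig // unitfE prodf_seq_neq0.
by apply/allP => i _; rewrite mxE diagA.
Qed.

Section Unitriangular.
Context {F : fieldType} {N : nat}.
Variable lt : rel 'I_N.
Hypothesis lt_ord : forall {i j}, lt i j -> (i < j)%N.
Hypothesis lt_trans : transitive lt.

Definition unitri (A : 'M[F]_N) : Prop := mx_supp lt (A - 1%:M).

Lemma lt_irrefl i : lt i i = false.
Proof. by apply/negP => /lt_ord; rewrite ltnn. Qed.

Lemma unitri_diag {A} i : unitri A -> A i i = 1.
Proof.
move=> uA; have := uA i i; rewrite lt_irrefl !mxE eqxx => /(_ isT) /eqP.
by rewrite subr_eq0 => /eqP.
Qed.

Lemma unitri_unit {A} : unitri A -> A \in unitmx.
Proof.
move=> uA; apply: upper_unitmx => [i j ji|i]; last by rewrite unitri_diag ?oner_eq0.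
have ij : (i == j) = false by rewrite -val_eqE /= gtn_eqF.
have := uA i j; rewrite !mxE ij subr0; apply.
by apply: contraL ji => /lt_ord; rewrite -leqNgt => /ltnW.
Qed.

Lemma unitri1 : unitri 1%:M.
Proof. by move=> i j _; rewrite subrr mxE. Qed.

Lemma unitri_elem p m c : lt p m -> unitri (1%:M + c *: delta_mx p m).
Proof. by move=> lpm; rewrite /unitri addrC addKr; apply/mx_suppZ/mx_supp_delta. Qed.

Lemma unitriM {A B} : unitri A -> unitri B -> unitri (A *m B).
Proof.
rewrite /unitri -{2}(subrK 1%:M A) -{2}(subrK 1%:M B).
move: (A - 1%:M) (B - 1%:M) => D D' lD lD'.
rewrite mulmxDl !mulmxDr !mulmx1 mul1mx addrA addrK.
by apply/mx_suppD/lD'/mx_suppD/lD/mx_suppMt.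
Qed.

Lemma unitriV {A} : unitri A -> unitri (invmx A).
Proof.
move=> lA; have uA := unitri_unit lA.
pose le i j := (i == j) || lt i j.
have le_refl : reflexive le by move=> i; rewrite /le eqxx.
have le_trans : transitive le.
  move=> j i k /orP[/eqP-> // | lij] /orP[/eqP<- | ljk]; first by rewrite /le lij orbT.
  by apply/orP; right; apply: lt_trans ljk.
have leA : mx_supp le A.
  rewrite -(subrK 1%:M A); apply/mx_suppD/mx_supp1 => //.
  by apply: mx_supp_sub lA => i j lij; rewrite /le lij orbT.
rewrite /unitri; have -> : invmx A - 1%:M = - ((A - 1%:M) *m invmx A).
  by rewrite mulmxBl mulmxV // mul1mx opprB.
apply/mx_suppN/(mx_suppM _ lA (mx_supp_inv le_refl le_trans leA uA)).
by move=> i k j lik /orP[/eqP<- // | lkj]; apply: lt_trans lkj.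
Qed.

Lemma delta_mxM_row0 (p m : 'I_N) (D : 'M[F]_N) :
  (forall j, D m j = 0) -> delta_mx p m *m D = 0.
Proof.
move=> Dm0; apply/matrixP => i j; rewrite !mxE (bigD1 m) //= big1 => [|z /negbTE zm].
  by rewrite Dm0 !mulr0 addr0.
by rewrite mxE zm andbF mul0r.
Qed.

(* peel off a nonzero entry (p, m) with m maximal: row m is then zero, so
   [1 + D = (1 + D p m E_pm) (1 + D')] where D' has one nonzero entry less *)
Lemma unitri_elem_ind (P : 'M[F]_N -> Prop) : P 1%:M ->
    (forall A B, P A -> P B -> P (A *m B)) ->
    (forall p m c, lt p m -> P (1%:M + c *: delta_mx p m)) ->
  forall A, unitri A -> P A.
Proof.
move=> P1 PM Pel A.
suff ind D : mx_supp lt D -> P (1%:M + D) by move=> /ind; rewrite addrC subrK.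
pose nz (D : 'M[F]_N) := [set ij : 'I_N * 'I_N | D ij.1 ij.2 != 0].
have [k] := ubnP #|nz D|; elim: k D => // k IH D nzD lD.
have [nz0 | [[p0 m0] nz0]] := set_0Vmem (nz D).
  suff -> : D = 0 by rewrite addr0.
  apply/matrixP => i j; move/setP/(_ (i, j)): nz0; rewrite !inE mxE /=.
  by move/negbT; rewrite negbK => /eqP.
have [[p m] /=] := @arg_maxnP _ (p0, m0) (mem (nz D)) (fun ij => val ij.2) nz0.
rewrite inE /= => Dpm maxm; have lpm := mx_supp_nz lD Dpm.
pose D' := D - D p m *: delta_mx p m.
have lD' : mx_supp lt D' by apply/mx_suppD/mx_suppN/mx_suppZ/mx_supp_delta.
have mp : (m == p) = false by rewrite -val_eqE /= (gtn_eqF (lt_ord lpm)).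
have D'm0 j : D' m j = 0.
  rewrite !mxE mp mulr0 subr0; apply/eqP; apply: contraT => Dmj.
  have := maxm (m, j); rewrite inE /= => /(_ Dmj).
  by rewrite leqNgt (lt_ord (mx_supp_nz lD Dmj)).
have nzD' : nz D' \proper nz D.
  apply/properP; split.
    apply/subsetP => -[i j]; rewrite !inE /= !mxE.
    by case: (eqVneq i p) => [->|]; case: (eqVneq j m) => [->|] //=;
      rewrite ?mulr1 ?subrr ?eqxx ?mulr0 ?subr0.
  by exists (p, m); rewrite !inE /= ?Dpm // !mxE !eqxx mulr1 subrr eqxx.
have -> : 1%:M + D = (1%:M + D p m *: delta_mx p m) *m (1%:M + D').
  rewrite mulmxDl mul1mx mulmxDr mulmx1 -scalemxAl delta_mxM_row0 //.
  by rewrite scaler0 addr0 addrA subrK.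
apply: PM; first exact: Pel.
by apply: IH lD'; rewrite -ltnS (leq_trans _ nzD) // ltnS proper_card.
Qed.

End Unitriangular.

Section IntervalSums.
Context {F : fieldType} {N : nat}.
Implicit Types (s t : 'I_N -> nat) (A B : 'M[F]_N).

Definition in_iv s t k i : bool := (s i <= k <= t i)%N.

Definition iv_rel s t : rel 'I_N := fun i j => iv_le (s i) (t i) (s j) (t j).

(* [B i j] is the coefficient of the i-th basis vector in the image of the j-th one:
   the column convention, whereas [homf] uses the row convention *)
Definition mx_hom {s t s' t'} B : homf (isum F s t) (isum F s' t') :=
  fun k x y => B (sval y) (sval x).

Definition iv_vtx {s t k i} (h : in_iv s t k i) : vtx (isum F s t) k := exist _ i h.

Lemma in_iv_vtx {s t k} (x : vtx (isum F s t) k) : in_iv s t k (sval x).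
Proof. exact: svalP x. Qed.

Lemma sum_vtx s t k (G : 'I_N -> F) :
  \sum_(x : vtx (isum F s t) k) G (sval x) = \sum_(i | in_iv s t k i) G i.
Proof.
by rewrite -(big_sub_cond (fun i => in_iv s t k i) xpredT G) big_mkcondr.
Qed.

Lemma hcomp_mx_hom s1 t1 s2 t2 s3 t3 A B :
    (forall k i (x : vtx (isum F s1 t1) k) (y : vtx (isum F s3 t3) k),
       ~~ in_iv s2 t2 k i -> A (sval y) i * B i (sval x) = 0) ->
  hcomp (@mx_hom s2 t2 s3 t3 A) (@mx_hom s1 t1 s2 t2 B) = mx_hom (A *m B).
Proof.
move=> outAB; apply: homf_ext => k x y; rewrite /hcomp /mx_hom mxE.
rewrite (sum_vtx s2 t2 k (fun i => B i (sval x) * A (sval y) i)) big_mkcond.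
by apply: eq_bigr => i _; rewrite mulrC; case: ifPn => // /outAB ->.
Qed.

Lemma hcomp_mx_hom1r s1 t1 s2 t2 s3 t3 A :
    (forall k i, in_iv s1 t1 k i -> in_iv s2 t2 k i) ->
  hcomp (@mx_hom s2 t2 s3 t3 A) (@mx_hom s1 t1 s2 t2 1%:M) = mx_hom A.
Proof.
move=> sub12; rewrite -[in RHS](mulmx1 A); apply: hcomp_mx_hom => k i x y out.
rewrite mxE; case: eqVneq => [ix | _]; last by rewrite mulr0.
by rewrite ix (sub12 _ _ (in_iv_vtx x)) in out.
Qed.

Lemma hcomp_mx_hom1l s1 t1 s2 t2 s3 t3 B :
    (forall k i, in_iv s3 t3 k i -> in_iv s2 t2 k i) ->
  hcomp (@mx_hom s2 t2 s3 t3 1%:M) (@mx_hom s1 t1 s2 t2 B) = mx_hom B.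
Proof.
move=> sub32; rewrite -[in RHS](mul1mx B); apply: hcomp_mx_hom => k i x y out.
rewrite mxE; case: eqVneq => [yi | _]; last by rewrite mul0r.
by rewrite -yi (sub32 _ _ (in_iv_vtx y)) in out.
Qed.

Lemma hscale_mx_hom s t s' t' c B : hscale c (@mx_hom s t s' t' B) = mx_hom (c *: B).
Proof. by apply: homf_ext => k x y; rewrite /hscale /mx_hom mxE. Qed.

Section IntervalSum.
Context {s t : 'I_N -> nat}.
Local Notation V := (isum F s t).
Local Notation iv := (iv_rel s t).
Local Notation mxh := (@mx_hom s t s t).

Lemma iv_rel_refl : reflexive iv.
Proof. by move=> i; rewrite /iv_rel /iv_le !leqnn. Qed.

Lemma iv_rel_trans : transitive iv.
Proof. by move=> j i k; rewrite /iv_rel /iv_le; lia. Qed.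

Lemma mx_hom1 : mxh 1%:M = hid V.
Proof. by apply: homf_ext => k x y; rewrite /mx_hom /hid mxE eq_sym. Qed.

Lemma hcomp_mx_hom_iv A B : mx_supp iv A -> mx_supp iv B ->
  hcomp (mxh A) (mxh B) = mxh (A *m B).
Proof.
move=> ivA ivB; apply: hcomp_mx_hom => k i x y.
have [ivyi | /ivA-> ] := boolP (iv (sval y) i); last by rewrite mul0r.
have [ivix | /ivB-> ] := boolP (iv i (sval x)); last by rewrite mulr0.
move: ivyi ivix (in_iv_vtx x) (in_iv_vtx y); rewrite /iv_rel /iv_le /in_iv; lia.
Qed.

Lemma is_hom_mx_hom {B} : mx_supp iv B -> is_hom (mxh B).
Proof.
move=> ivB k x y; rewrite /mx_hom /=.
rewrite (sum_vtx s t k (fun i => B i (sval x) * (i == sval y)%:R)) sum_mul_delta.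
rewrite (sum_vtx s t k.+1 (fun i => (sval x == i)%:R * B (sval y) i)) sum_delta_mul.
have [ivyx | /ivB-> ] := boolP (iv (sval y) (sval x)); last by rewrite !if_same.
have /andP[-> ->] // : in_iv s t k (sval y) && in_iv s t k.+1 (sval x).
by move: ivyx (in_iv_vtx x) (in_iv_vtx y); rewrite /iv_rel /iv_le /in_iv; lia.
Qed.

Lemma is_aut_mx_hom {B} : mx_supp iv B -> B \in unitmx -> is_aut (mxh B).
Proof.
move=> ivB uB; have ivB' := mx_supp_inv iv_rel_refl iv_rel_trans ivB uB.
split; first exact: is_hom_mx_hom.
exists (mx_hom (invmx B)); split; first exact: is_hom_mx_hom.
by rewrite !hcomp_mx_hom_iv // ?mulmxV ?mulVmx // mx_hom1.
Qed.

Definition hom_coef (f : homf V V) k (j i : 'I_N) : F :=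
  if insub j : option (vtx V k) is Some x then
    if insub i : option (vtx V k) is Some y then f k x y else 0
  else 0.

Lemma hom_coefE f k (x y : vtx V k) : hom_coef f k (sval x) (sval y) = f k x y.
Proof. by rewrite /hom_coef !valK. Qed.

Lemma hom_coef_out f k j i : ~~ (in_iv s t k j && in_iv s t k i) -> hom_coef f k j i = 0.
Proof.
rewrite /hom_coef negb_and => /orP[] /negbTE out; first by rewrite insubF.
by case: insubP => // x _ _; rewrite insubF.
Qed.

Lemma hom_coef_step {f k j i} : is_hom f -> in_iv s t k j -> in_iv s t k.+1 i ->
  (if in_iv s t k i then hom_coef f k j i else 0)
  = (if in_iv s t k.+1 j then hom_coef f k.+1 j i else 0).
Proof.
move=> hf jk ik1; have := hf k (iv_vtx jk) (iv_vtx ik1); rewrite /=.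
under eq_bigr => z _ do rewrite -hom_coefE.
under [in RHS]eq_bigr => z _ do rewrite -hom_coefE.
rewrite (sum_vtx s t k (fun z => hom_coef f k j z * (z == i)%:R)) sum_mul_delta.
by rewrite (sum_vtx s t k.+1 (fun z => (j == z)%:R * hom_coef f k.+1 z i)) sum_delta_mul.
Qed.

Lemma hom_coef_const {f j i k1 k2} : is_hom f -> (k1 <= k2)%N ->
    in_iv s t k1 j -> in_iv s t k1 i -> in_iv s t k2 j -> in_iv s t k2 i ->
  hom_coef f k1 j i = hom_coef f k2 j i.
Proof.
move=> hf; elim: k2 => [|k2 IH] le12 j1 i1 j2 i2; first by case: k1 le12 {j1 i1}.
have [lt12 | gt12 | -> //] := ltngtP k1 k2.+1; last by lia.
have j2' : in_iv s t k2 j by move: j1 j2; rewrite /in_iv; lia.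
have i2' : in_iv s t k2 i by move: i1 i2; rewrite /in_iv; lia.
rewrite (IH _ j1 i1 j2' i2') //.
by have := hom_coef_step hf j2' i2; rewrite i2' j2.
Qed.

(* move to the vertex just before the start of M_i, or just after the end of M_j:
   there one side of the commutation relation vanishes *)
Lemma hom_coef_iv {f k j i} : is_hom f -> ~~ iv i j -> hom_coef f k j i = 0.
Proof.
move=> hf; rewrite /iv_rel /iv_le negb_and -!ltnNge => ivij.
have [/andP[jk ik] | ] := boolP (in_iv s t k j && in_iv s t k i); last exact: hom_coef_out.
move: jk ik; rewrite /in_iv => jk ik.
case/orP: ivij => [sji | tji].
  have j0 : in_iv s t (s i).-1 j by rewrite /in_iv; lia.
  have i1 : in_iv s t (s i).-1.+1 i by rewrite /in_iv; lia.
  have := hom_coef_step hf j0 i1; rewrite ifF ?ifT; try by rewrite /in_iv; lia.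
  rewrite prednK => [->|]; last by lia.
  by symmetry; apply: (hom_coef_const hf); rewrite /in_iv; lia.
have j0 : in_iv s t (t j) j by rewrite /in_iv; lia.
have i1 : in_iv s t (t j).+1 i by rewrite /in_iv; lia.
have := hom_coef_step hf j0 i1; rewrite ifT ?ifF; try by rewrite /in_iv; lia.
by move=> <-; apply: (hom_coef_const hf); rewrite /in_iv; lia.
Qed.

Definition hom_mx (f : homf V V) : 'M[F]_N := \matrix_(i, j) hom_coef f (s j) j i.

Lemma hom_mxK {f} : is_hom f -> mxh (hom_mx f) = f.
Proof.
move=> hf; apply: homf_ext => k x y; rewrite /mx_hom mxE -hom_coefE.
have jx := in_iv_vtx x; have iy := in_iv_vtx y; move: (sval x) (sval y) jx iy => j i jk ik.
have [ivij | /(hom_coef_iv hf) ivij] := boolP (iv i j); last by rewrite !ivij.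
by apply: (hom_coef_const hf); move: ivij jk ik; rewrite /iv_rel /iv_le /in_iv; lia.
Qed.

Lemma hom_mx_supp {f} : is_hom f -> mx_supp iv (hom_mx f).
Proof. by move=> hf i j ivij; rewrite mxE (hom_coef_iv hf). Qed.

Lemma hom_mx_supp_vtx f : mx_supp (fun i j => in_iv s t (s j) i) (hom_mx f).
Proof. by move=> i j out; rewrite mxE hom_coef_out // negb_and out orbT. Qed.

Lemma mx_hom_inj A B : (forall j, s j <= t j)%N ->
    mx_supp (fun i j => in_iv s t (s j) i) A -> mx_supp (fun i j => in_iv s t (s j) i) B ->
  mxh A = mxh B -> A = B.
Proof.
move=> st ovA ovB AB; apply/matrixP => i j.
have [ij | out] := boolP (in_iv s t (s j) i); last by rewrite ovA ?ovB.
have jj : in_iv s t (s j) j by rewrite /in_iv leqnn st.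
exact: (congr1 (fun f : homf V V => f (s j) (iv_vtx jj) (iv_vtx ij)) AB).
Qed.

Lemma supported_in_delta {f j i} : is_hom f -> supported_in j i f ->
  f = mxh (hom_mx f i j *: delta_mx i j).
Proof.
move=> hf fji; apply: homf_ext => k x y; rewrite /mx_hom !mxE.
have [/andP[/eqP<- /eqP<-] | yx] := boolP ((sval y == i) && (sval x == j)).
  by rewrite mulr1 -[in LHS](hom_mxK hf) /mx_hom mxE.
rewrite mulr0; apply/eqP; apply: contraR yx => /fji [-> ->].
by rewrite !eqxx.
Qed.

End IntervalSum.

End IntervalSums.

Section Resolution.
Context {F : fieldType} {n N : nat} {sM tM : 'I_N -> nat}.
Hypothesis stM : forall i, (sM i <= tM i <= n)%N.
Local Notation cn := (fun _ : 'I_N => n).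
Local Notation tQ := (fun i : 'I_N => (tM i).+1).
Local Notation ivM := (iv_rel sM tM).

Lemma Omega_ivR : Omega sM =2 iv_rel sM cn.
Proof. by move=> i j; rewrite /iv_rel /iv_le leqnn andbT. Qed.

Lemma ivM_Omega : subrel ivM (Omega sM).
Proof. by move=> i j /andP[]. Qed.

Lemma in_ivMR k i : in_iv sM tM k i -> in_iv sM cn k i.
Proof. by have := stM i; rewrite /in_iv; lia. Qed.

Lemma in_ivQR k i : in_iv tQ cn k i -> in_iv sM cn k i.
Proof. by have := stM i; rewrite /in_iv; lia. Qed.

Lemma iota_resE : iota_res F n sM tM = mx_hom 1%:M.
Proof. by apply: homf_ext => k x y; rewrite /mx_hom mxE eq_sym. Qed.

Lemma pi_resE : pi_res F n sM tM = mx_hom 1%:M.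
Proof. by apply: homf_ext => k x y; rewrite /mx_hom mxE eq_sym. Qed.

Lemma sec_resE : sec_res F n sM tM = mx_hom 1%:M.
Proof. by apply: homf_ext => k x y; rewrite /mx_hom mxE eq_sym. Qed.

Lemma emb_invE B : mx_supp (Omega sM) B -> emb_inv F n sM B = mx_hom B.
Proof.
move=> OB; apply: homf_ext => k x y.
rewrite /mx_hom [in RHS](matrix_sum_delta B) summxE; apply: eq_bigr => i _.
rewrite summxE big_mkcond; apply: eq_bigr => j _.
by rewrite /rho !mxE andbC; case: ifPn => // /OB->; rewrite mul0r.
Qed.

Lemma Psi_mx_hom B : Psi F n sM tM (mx_hom B) = mx_hom B.
Proof.
by rewrite /Psi pi_resE sec_resE hcomp_mx_hom1r ?hcomp_mx_hom1l //; apply: in_ivMR.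
Qed.

Lemma Psi_emb_invE B : mx_supp ivM B -> Psi F n sM tM (emb_inv F n sM B) = mx_hom B.
Proof. by move=> ivB; rewrite emb_invE ?Psi_mx_hom //; apply: mx_supp_sub ivM_Omega ivB. Qed.

Lemma Pimg_unitmx B : Pimg F n sM tM B -> B \in unitmx.
Proof.
move=> [OB [[_ [G [homG [BG _]]]] _]].
have ivRB : mx_supp (iv_rel sM cn) B by apply: mx_supp_sub OB => i j; rewrite Omega_ivR.
rewrite emb_invE // -(hom_mxK homG) hcomp_mx_hom_iv // in BG; last exact: hom_mx_supp.
have ovR : subrel (iv_rel sM cn) (fun i j => in_iv sM cn (sM j) i).
  by move=> i j; have := stM j; rewrite /iv_rel /iv_le /in_iv; lia.
suff /mulmx1_unit[] : B *m hom_mx G = 1%:M by [].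
apply: (mx_hom_inj _ _ _ _ _ (etrans BG (esym mx_hom1))) => [j | |]; first by have := stM j; lia.
  exact/(mx_supp_sub ovR)/(mx_suppMt iv_rel_trans ivRB)/hom_mx_supp/homG.
exact/(mx_supp_sub ovR)/mx_supp1/iv_rel_refl.
Qed.

(* f(iota(Q)) = iota(Q) forces B i j = 0 when the summand M_i ends after M_j *)
Lemma Pimg_supp B : Pimg F n sM tM B -> mx_supp ivM B.
Proof.
move=> [OB [_ [g [_ Bg]]]] i j.
rewrite emb_invE // iota_resE hcomp_mx_hom1r in Bg; last exact: in_ivQR.
have [Oij | /OB //] := boolP (Omega sM i j).
move: Oij; rewrite /iv_rel /iv_le /Omega => -> /=; rewrite -ltnNge => tji.
have jQ : in_iv tQ cn (tM i) j by have := stM i; have := stM j; rewrite /in_iv; lia.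
have iR : in_iv sM cn (tM i) i by have := stM i; rewrite /in_iv; lia.
have := congr1 (fun f : homf (Qrep F n tM) (Rrep F n sM) => f (tM i) (iv_vtx jQ) (iv_vtx iR)) Bg.
rewrite /mx_hom /= => ->; rewrite /hcomp /=.
under eq_bigr => z _ do rewrite -[g _ _ _]hom_coefE /mx_hom mxE eq_sym.
rewrite (sum_vtx _ _ _ (fun z => hom_coef g (tM i) j z * (z == i)%:R)) sum_mul_delta.
by rewrite /in_iv ltnn.
Qed.

Lemma Pimg_of_supp B : B \in unitmx -> mx_supp ivM B -> Pimg F n sM tM B.
Proof.
move=> uB ivB; have OB := mx_supp_sub ivM_Omega ivB.
have ivRB : mx_supp (iv_rel sM cn) B by apply: mx_supp_sub OB => i j; rewrite Omega_ivR.
have ivQB : mx_supp (iv_rel tQ cn) B.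
  by apply: mx_supp_sub ivB => i j; rewrite /iv_rel /iv_le ltnS leqnn !andbT => /andP[].
split=> //; rewrite emb_invE //; split; first exact: is_aut_mx_hom.
exists (mx_hom B); split; first exact: is_aut_mx_hom.
rewrite iota_resE hcomp_mx_hom1r; last exact: in_ivQR.
rewrite -[in LHS](mul1mx B); symmetry; apply: hcomp_mx_hom => k i x y out.
rewrite mxE; case: eqVneq => [yi | _]; last by rewrite mul0r.
rewrite ivB ?mulr0 //; apply: contraNN out => ivix.
by move: ivix (in_iv_vtx x) (in_iv_vtx y); rewrite -yi /iv_rel /iv_le /in_iv; lia.
Qed.

Lemma PimgP B : Pimg F n sM tM B <-> B \in unitmx /\ mx_supp ivM B.
Proof.
split=> [PB | [uB ivB]]; last exact: Pimg_of_supp.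
by split; [apply: Pimg_unitmx | apply: Pimg_supp].
Qed.

End Resolution.

Lemma perm_linear_extension {N} (lt : rel 'I_N) : irreflexive lt -> transitive lt ->
  exists p : 'S_N, forall u v, lt u v -> (p u < p v)%N.
Proof.
move=> ltii lt_trans.
pose key u := (#|[set w | lt w u]| * N + u)%N.
have key_inj : injective key.
  move=> u v /(congr1 (modn^~ N)); rewrite !modnMDl !modn_small // => uv; exact: val_inj.
have key_mono u v : lt u v -> (key u < key v)%N.
  move=> luv; have : (#|[set w | lt w u]| < #|[set w | lt w v]|)%N.
    apply/proper_card/properP; split; last by exists u; rewrite !inE ?ltii.
    by apply/subsetP => w; rewrite !inE => /lt_trans; apply.
  by rewrite /key; have := ltn_ord u; nia.
pose rk u := #|[set w | (key w < key u)%N]|.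
have rk_ord u : (rk u < N)%N.
  rewrite -[X in (_ < X)%N]card_ord; apply/proper_card/properP; split; first exact/subsetP.
  by exists u; rewrite ?inE ?ltnn.
have rk_mono u v : (key u < key v)%N -> (rk u < rk v)%N.
  move=> kuv; apply/proper_card/properP; split; last by exists u; rewrite !inE ?ltnn.
  by apply/subsetP => w; rewrite !inE => /ltn_trans; apply.
have rk_inj : injective (fun u => Ordinal (rk_ord u)).
  move=> u v /(congr1 val) /= ruv; apply: key_inj.
  by have [/rk_mono | /rk_mono | //] := ltngtP (key u) (key v); rewrite ruv ltnn.
by exists (perm rk_inj) => u v /key_mono; rewrite !permE; apply: rk_mono.
Qed.

Lemma conj_perm_mxE {F : fieldType} {N} (p : 'S_N) (B : 'M[F]_N) u v :
  (perm_mx p *m B *m invmx (perm_mx p)) u v = B (p u) (p v).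
Proof.
have -> : invmx (perm_mx p) = perm_mx p^-1%g :> 'M[F]_N.
  have pp : perm_mx p *m perm_mx p^-1%g = 1%:M :> 'M[F]_N by rewrite -perm_mxM mulgV perm_mx1.
  by rewrite -[invmx _]mulmx1 -pp mulKmx ?unitmx_perm.
by rewrite -row_permE -col_permE !mxE.
Qed.

Lemma parabolic_of_total {F : fieldType} {N} (P : 'M[F]_N -> Prop) (r : rel 'I_N) :
    (forall B, P B <-> B \in unitmx /\ mx_supp r B) ->
  reflexive r -> transitive r -> total r -> parabolic P.
Proof.
move=> PE rr tr rtot; split.
  split=> [B /PE[] // | | A B /PE[uA rA] /PE[uB rB] | A /PE[uA rA]]; apply/PE.
  - by split; [apply: unitmx1 | apply: mx_supp1].
  - by rewrite unitmx_mul uA uB; split=> //; apply: mx_suppMt.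
  - by rewrite unitmx_inv; split=> //; apply: mx_supp_inv.
have [p p_mono] : exists p : 'S_N, forall u v, ~~ r v u -> (p u < p v)%N.
  apply: perm_linear_extension => [u | v u w rvu rwv]; first by rewrite /= rr.
  apply: contra rwv => rwu; apply: tr rwu _.
  by have := rtot u v; rewrite (negbTE rvu) orbF.
exists (perm_mx p); split=> [|B [uB upB]]; first exact: unitmx_perm.
apply/PE; split; first by rewrite !unitmx_mul unitmx_perm unitmx_inv unitmx_perm uB.
by move=> u v ruv; rewrite conj_perm_mxE upB ?p_mono.
Qed.

Lemma mulmx_delta_mxE {F : fieldType} {N} (g h : 'M[F]_N) a b u v :
  (g *m delta_mx a b *m h) u v = g u a * h b v.
Proof.
by rewrite -(mul_delta_mx (0 : 'I_1)) mulmxA -colE -mulmxA -rowE mxE big_ord1 !mxE.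
Qed.

Lemma upper_borel_1D {F : numFieldType} {N} {a b : 'I_N} : (a <= b)%N ->
  upper_borel (1%:M + delta_mx a b : 'M[F]_N).
Proof.
move=> ab; have low (i j : 'I_N) : (j < i)%N -> (1%:M + delta_mx a b : 'M[F]_N) i j = 0.
  move=> ji; rewrite !mxE -val_eqE /= (gtn_eqF ji) add0r; apply/eqP.
  by rewrite pnatr_eq0 eqb0; apply: contraTN ji => /andP[/eqP-> /eqP->]; rewrite -leqNgt.
split=> //; apply: upper_unitmx => // i.
by rewrite !mxE eqxx -natrD pnatr_eq0.
Qed.

(* conjugating [1 + E_ab] (a <= b) by g puts g u a * g^-1 b v at (u, v) *)
Lemma total_of_parabolic {F : numFieldType} {N} (P : 'M[F]_N -> Prop) (r : rel 'I_N) :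
  reflexive r -> (forall B, P B -> mx_supp r B) -> parabolic P -> total r.
Proof.
move=> rr Pr [_ [g [ug Pg]]]; set h := invmx g.
have gEh (a b u v : 'I_N) : (a <= b)%N -> g u a * h b v != 0 -> r u v.
  move=> ab nz; have [-> // | uv] := eqVneq u v.
  apply: (mx_supp_nz (Pr _ (Pg _ (upper_borel_1D ab)))).
  by rewrite mulmxDr mulmx1 mulmxDl mulmxV // mxE mulmx_delta_mxE mxE (negbTE uv) add0r.
have diag (u : 'I_N) : exists b, g u b * h b u != 0.
  apply/existsP; apply: contraT; rewrite negb_exists => /forallP gh0.
  have := congr1 (fun A : 'M[F]_N => A u u) (mulmxV ug); rewrite !mxE eqxx big1 => [/eqP|b _].
    by rewrite eq_sym oner_eq0.
  by apply/eqP; rewrite -[_ == 0]negbK gh0.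
move=> i j; have [bi] := diag i; have [bj] := diag j.
rewrite !mulf_eq0 !negb_or => /andP[gi hi] /andP[gj hj].
have [bij | bji] := leqP bi bj; apply/orP; [left | right].
  by apply: (gEh _ _ _ _ bij); rewrite mulf_neq0.
by apply: (gEh _ _ _ _ (ltnW bji)); rewrite mulf_neq0.
Qed.

Definition levi {F : fieldType} {N r} (typ : 'I_N -> 'I_r) (B : 'M[F]_N) : Prop :=
  B \in unitmx /\ mx_supp (fun i j => typ i == typ j) B.

Section Ordered.
Context {F : fieldType} {n N r : nat} {sM tM : 'I_N -> nat} {typ : 'I_N -> 'I_r}.
Hypothesis stM : forall i, (sM i <= tM i <= n)%N.
Hypothesis ivM_typ : forall i j, iv_rel sM tM i j = (typ i <= typ j)%N.
Implicit Types B : 'M[F]_N.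
Local Notation M := (Mrep F sM tM).
Local Notation ivM := (iv_rel sM tM).
Local Notation PsiE B := (Psi F n sM tM (emb_inv F n sM B)).

Lemma typ_eq_iv {i j} : typ i = typ j -> sM i = sM j /\ tM i = tM j.
Proof.
move=> tij; have := ivM_typ i j; have := ivM_typ j i; rewrite tij leqnn /iv_rel /iv_le.
by move=> /andP[? ?] /andP[? ?]; split; apply/eqP; rewrite eqn_leq; apply/andP.
Qed.

Lemma typ_eq_in_iv {i j} : typ i = typ j -> in_iv sM tM (sM j) i.
Proof. by rewrite /in_iv => /typ_eq_iv[-> ->]; rewrite leqnn; have /andP[] := stM j. Qed.

Lemma mx_supp_typ_iv {B} : mx_supp (fun i j => typ i <= typ j)%N B -> mx_supp ivM B.
Proof. by apply: mx_supp_sub => i j; rewrite ivM_typ. Qed.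

Lemma mx_supp_typ_eq_iv {B} : mx_supp (fun i j => typ i == typ j) B -> mx_supp ivM B.
Proof. by move=> tB; apply/mx_supp_typ_iv/(mx_supp_sub _ tB) => i j /eqP->. Qed.

Lemma mx_supp_typ_eq_ov {B} :
  mx_supp (fun i j => typ i == typ j) B -> mx_supp (fun i j => in_iv sM tM (sM j) i) B.
Proof. by apply: mx_supp_sub => i j /eqP; apply: typ_eq_in_iv. Qed.

Lemma PimgE B : Pimg F n sM tM B <-> B \in unitmx /\ mx_supp (fun i j => typ i <= typ j)%N B.
Proof.
rewrite PimgP //; split=> -[uB supB]; split=> //; apply: mx_supp_sub supB => i j.
  by rewrite ivM_typ.
by rewrite -ivM_typ.
Qed.

Lemma Psi_levi B : levi typ B -> LM typ (PsiE B).
Proof.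
move=> [uB tB]; have ivB := mx_supp_typ_eq_iv tB.
rewrite Psi_emb_invE //; split; first exact: is_aut_mx_hom.
by move=> k x y tyx; rewrite /mx_hom tB // eq_sym.
Qed.

Lemma Psi_leviM B B' : levi typ B -> levi typ B' -> PsiE (B *m B') = hcomp (PsiE B) (PsiE B').
Proof.
move=> [_ /mx_supp_typ_eq_iv ivB] [_ /mx_supp_typ_eq_iv ivB'].
by rewrite !Psi_emb_invE ?hcomp_mx_hom_iv //; apply: mx_suppMt ivB ivB'; apply: iv_rel_trans.
Qed.

Lemma Psi_levi_inj B B' : levi typ B -> levi typ B' -> PsiE B = PsiE B' -> B = B'.
Proof.
move=> [_ tB] [_ tB']; have ivB := mx_supp_typ_eq_iv tB; have ivB' := mx_supp_typ_eq_iv tB'.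
rewrite !Psi_emb_invE //.
apply: mx_hom_inj; [by move=> j; have /andP[] := stM j | exact: mx_supp_typ_eq_ov..].
Qed.

Lemma Psi_levi_surj g : LM typ g -> exists B, levi typ B /\ PsiE B = g.
Proof.
move=> [[homg [G [homG [gG _]]]] gtyp].
have tB : mx_supp (fun i j => typ i == typ j) (hom_mx g).
  move=> i j tij; rewrite mxE.
  have [/andP[jj ij] | out] := boolP (in_iv sM tM (sM j) j && in_iv sM tM (sM j) i).
    by have := gtyp _ (iv_vtx jj) (iv_vtx ij); rewrite -hom_coefE /= eq_sym; apply.
  exact: hom_coef_out.
exists (hom_mx g); split; last by rewrite Psi_emb_invE ?hom_mxK //; apply: mx_supp_typ_eq_iv.
split=> //; rewrite -(hom_mxK homg) -(hom_mxK homG) hcomp_mx_hom_iv in gG; last first.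
- exact: hom_mx_supp.
- exact: mx_supp_typ_eq_iv.
suff /mulmx1_unit[] : hom_mx g *m hom_mx G = 1%:M by [].
apply: (mx_hom_inj _ _ _ _ _ (etrans gG (esym mx_hom1))) => [j | |].
- by have /andP[] := stM j.
- apply: (mx_suppM _ tB (hom_mx_supp_vtx G)) => i z j /eqP tiz.
  by rewrite /in_iv; have [-> ->] := typ_eq_iv tiz.
- by apply/mx_supp_typ_eq_ov/mx_supp1.
Qed.

Section Unipotent.
Hypothesis typ_mono : forall i j : 'I_N, (i <= j)%N -> (typ i <= typ j)%N.
Context {phi : 'I_N -> 'I_N -> homf M M}.
Hypothesis phi_hom : forall i j, is_hom (phi i j).
Hypothesis phi_supp : forall i j, supported_in j i (phi i j).
Hypothesis phi_nz : forall i j, (exists g : homf M M,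
    [/\ is_hom g, supported_in j i g & exists k x y, g k x y != 0]) ->
  exists k x y, phi i j k x y != 0.
Local Notation typ_lt := (fun i j => typ i < typ j)%N.
Local Notation c i j := (hom_mx (phi i j) i j).

Lemma typ_lt_ord i j : typ_lt i j -> (i < j)%N.
Proof. by rewrite ltnNge; apply: contraL => /typ_mono; rewrite -leqNgt. Qed.

Lemma typ_lt_trans : transitive typ_lt.
Proof. by move=> j i k; apply: ltn_trans. Qed.

Lemma unitri_typ_iv {B} : unitri typ_lt B -> mx_supp ivM B.
Proof.
move=> uB; rewrite -(subrK 1%:M B); apply/mx_suppD/mx_supp1/iv_rel_refl.
by apply: mx_supp_typ_iv (mx_supp_sub _ uB) => i j /ltnW.
Qed.

Lemma phi_supp_lt {i j} : typ i != typ j -> mx_supp typ_lt (c i j *: delta_mx i j).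
Proof.
move=> tij; have [-> | c0] := eqVneq (c i j) 0; first by rewrite scale0r => ? ? _; rewrite mxE.
apply/mx_suppZ/mx_supp_delta; rewrite ltn_neqAle tij -ivM_typ.
exact: mx_supp_nz (hom_mx_supp (phi_hom i j)) c0.
Qed.

Lemma exp_phi i j z : typ i != typ j ->
  hexp_trunc N.+1 (hscale z (phi i j)) = mx_hom (1%:M + z *: (c i j *: delta_mx i j)).
Proof.
move=> tij; have ivD : mx_supp ivM (z *: (c i j *: delta_mx i j)).
  apply/mx_supp_typ_iv/mx_suppZ; apply: (mx_supp_sub _ (phi_supp_lt tij)) => ? ?; exact: ltnW.
rewrite {1}(supported_in_delta (phi_hom i j) (phi_supp i j)) hscale_mx_hom.
rewrite hexp_trunc_sqr0 => [||].
- by apply: homf_ext => k x y; rewrite /mx_hom /hid !mxE -val_eqE eq_sym.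
- by rewrite ltnS (leq_trans _ (ltn_ord i)).
rewrite hcomp_mx_hom_iv // -!scalemxAl -!scalemxAr mul_delta_mx_cond.
have -> : (j == i) = false by apply: contraNF tij => /eqP->.
by apply: homf_ext => k x y; rewrite /mx_hom !mxE !mulr0.
Qed.

Lemma exp_phi_unitri i j z : typ i != typ j ->
  unitri typ_lt (1%:M + z *: (c i j *: delta_mx i j)).
Proof. by move=> tij; rewrite /unitri addrC addKr; apply/mx_suppZ/phi_supp_lt. Qed.

(* if phi_pm = 0 then Hom(M_m, M_p) = 0, so that [1 + a E_pm] acts as the identity *)
Lemma elem_in_gen_subgroup (H : homf M M -> Prop) p m a :
    is_aut_subgroup H ->
    (forall i j z, typ i != typ j -> H (hexp_trunc N.+1 (hscale z (phi i j)))) -> typ_lt p m ->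
  H (mx_hom (1%:M + a *: delta_mx p m)).
Proof.
move=> [_ H1 _ _] Hgen tpm; have tpm' : typ p != typ m by rewrite neq_ltn tpm.
have [c0 | c0] := eqVneq (c p m) 0; last first.
  by have := Hgen p m (a / c p m) tpm'; rewrite exp_phi // scalerA divfK.
suff E0 k (x y : vtx M k) : (mx_hom (delta_mx p m) : homf M M) k x y = 0.
  rewrite (_ : mx_hom _ = hid M) //; apply: homf_ext => k x y.
  by have := E0 k x y; rewrite -mx_hom1 /mx_hom !mxE => ->; rewrite mulr0 addr0.
apply/eqP; apply: contraT => nz.
have [|k' [x' [y']]] := phi_nz p m.
  exists (mx_hom (delta_mx p m)); split; last by exists k, x, y.
    by apply/is_hom_mx_hom/mx_supp_typ_iv/mx_supp_delta/ltnW.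
  move=> k'' x' y'; rewrite /mx_hom mxE; case: andP => [[/eqP-> /eqP->] | _] //; by rewrite eqxx.
by rewrite (supported_in_delta (phi_hom p m) (phi_supp p m)) c0 scale0r /mx_hom mxE eqxx.
Qed.

Lemma UM_unitri g : UM typ phi g <-> exists B, unitri typ_lt B /\ mx_hom B = g.
Proof.
split=> [UMg | [B [uB <-]] H HH Hgen].
  apply: (UMg (fun h => exists B, unitri typ_lt B /\ mx_hom B = h)); last first.
    move=> _ [i [j [z [tij ->]]]]; exists (1%:M + z *: (c i j *: delta_mx i j)).
    by rewrite exp_phi //; split=> //; apply: exp_phi_unitri.
  split=> [_ [B [uB <-]] | | _ _ [B [uB <-]] [B' [uB' <-]] | _ [B [uB <-]]].
  - exact: is_aut_mx_hom (unitri_typ_iv uB) (unitri_unit _ typ_lt_ord uB).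
  - by exists 1%:M; rewrite mx_hom1; split=> //; apply: unitri1.
  - exists (B *m B'); rewrite hcomp_mx_hom_iv; try by apply: unitri_typ_iv.
    by split=> //; apply: (unitriM _ typ_lt_trans uB uB').
  - have uBV := unitriV _ typ_lt_ord typ_lt_trans uB.
    exists (mx_hom (invmx B)); split; first by exists (invmx B).
    rewrite hcomp_mx_hom_iv; try by apply: unitri_typ_iv.
    by rewrite mulmxV ?mx_hom1 // (unitri_unit _ typ_lt_ord uB).
have [_ H1 HM _] := HH.
suff [] : mx_supp ivM B /\ H (mx_hom B) by [].
apply: (unitri_elem_ind _ typ_lt_ord (fun A => mx_supp ivM A /\ H (mx_hom A)) _ _ _ _ uB).
- by rewrite mx_hom1; split=> //; apply/mx_supp1/iv_rel_refl.
- move=> A A' [ivA HA] [ivA' HA']; rewrite -hcomp_mx_hom_iv //; split; last exact: HM.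
  exact: mx_suppMt iv_rel_trans ivA ivA'.
move=> p m a tpm; split; last first.
  by apply: elem_in_gen_subgroup => // i j z tij; apply: Hgen; exists i, j, z.
exact/unitri_typ_iv/unitri_elem.
Qed.


End Unipotent.

End Ordered.

Lemma block_idx_mono r (a : 'I_r -> nat) : {homo block_idx a : i j / (i <= j)%N}.
Proof.
move=> i j ij; apply: leq_sum => l _.
by case: (leqP (\sum_(l' < r | (l' <= l)%N) a l') i) => // ci; rewrite (leq_trans ci ij).
Qed.

Section BlockTypes.
Context {F : fieldType} {r N : nat} {a : 'I_r -> nat} {typ : 'I_N -> 'I_r}.
Hypothesis typ_block : forall i : 'I_N, nat_of_ord (typ i) = block_idx a i.
Implicit Types B : 'M[F]_N.

Lemma std_parabolicE B :
  std_parabolic a B <-> B \in unitmx /\ mx_supp (fun i j => typ i <= typ j)%N B.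
Proof.
split=> -[uB supB]; split=> // i j.
  by rewrite -ltnNge => tji; apply: supB; rewrite -!typ_block.
by rewrite -!typ_block => tji; apply: supB; rewrite -ltnNge.
Qed.

Lemma std_leviE B : std_levi a B <-> levi typ B.
Proof.
split=> -[uB supB]; split=> // i j.
  by rewrite -val_eqE /= !typ_block; apply: supB.
by move=> tij; apply: supB; rewrite -val_eqE /= !typ_block.
Qed.

Lemma std_unipE B : std_unip a B <-> unitri (fun i j => typ i < typ j)%N B.
Proof.
split=> [[lowB diagB] i j | uB].
  rewrite -leqNgt leq_eqVlt !typ_block !mxE => /orP[/eqP/esym/diagB-> | tji].
    by rewrite subrr.
  have ij : (i == j) = false by apply: contraTF tji => /eqP->; rewrite ltnn.
  by rewrite lowB // ij subrr.
split=> i j; rewrite -!typ_block => tij; have := uB i j; rewrite !mxE.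
  have ij : (i == j) = false by apply: contraTF tij => /eqP->; rewrite ltnn.
  by rewrite -leqNgt (ltnW tij) ij subr0 => ->.
by rewrite tij ltnn => /(_ isT) /eqP; rewrite subr_eq0 => /eqP.
Qed.

End BlockTypes.

Section Summands.
Context {r N : nat} {s t : 'I_r -> nat} {typ : 'I_N -> 'I_r}.
Local Notation ivM := (iv_rel (fun i => s (typ i)) (fun i => t (typ i))).

Lemma catenoid_total : (forall l, exists i, typ i = l) -> catenoid s t <-> total ivM.
Proof.
move=> typ_surj; split=> [cat i j | tot l l']; first exact: cat.
by have [[i <-] [j <-]] := (typ_surj l, typ_surj l'); apply: tot.
Qed.

Lemma iv_rel_typ : (forall l l', s l = s l' -> t l = t l' -> l = l') ->
    (forall l l' : 'I_r, (l < l')%N -> iv_le (s l) (t l) (s l') (t l')) ->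
  forall i j, ivM i j = (typ i <= typ j)%N.
Proof.
move=> st_inj st_ord i j; apply/idP/idP => [ivij | ]; last first.
  rewrite leq_eqVlt => /orP[/eqP/val_inj tij | /st_ord //].
  by rewrite /iv_rel /iv_le /= tij !leqnn.
rewrite leqNgt; apply/negP => tji; have := st_ord _ _ tji; apply/negP.
have : typ j != typ i by rewrite neq_ltn tji.
apply: contra => le_ji; apply/eqP/st_inj; move: ivij le_ji; rewrite /iv_rel /iv_le; lia.
Qed.

End Summands.

Theorem proposition2p5 (C : numClosedFieldType) (n r N : nat)
    (s t a : 'I_r -> nat) (typ : 'I_N -> 'I_r) :
  let sM := fun i : 'I_N => s (typ i) in
  let tM := fun i : 'I_N => t (typ i) in
  let M := Mrep C sM tM in
  forall phi : 'I_N -> 'I_N -> homf M M,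
  (* M(1), ..., M(r) are the indecomposables M[s l, t l], pairwise non-isomorphic *)
  (forall l, (1 <= s l <= t l)%N /\ (t l <= n)%N) ->
  (forall l l', s l = s l' -> t l = t l' -> l = l') ->
  (* M = (+)_l M(l)^(a_l), the summand M_i being isomorphic to M(typ i) *)
  (forall l, (0 < a l)%N) ->
  (forall l, #|[set i | typ i == l]| = a l) ->
  (* indexing with P^1 <= ... <= P^N *)
  (forall i j : 'I_N, (i <= j)%N -> (sM i <= sM j)%N) ->
  (* phi_ij : a fixed element of Hom(M_j, M_i), nonzero if this space is nonzero *)
  (forall i j, is_hom (phi i j)) ->
  (forall i j, supported_in j i (phi i j)) ->
  (forall i j, (exists g : homf M M,
                  [/\ is_hom g, supported_in j i g & exists k x y, g k x y != 0]) ->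
               exists k x y, phi i j k x y != 0) ->
  (catenoid s t <-> parabolic (Pimg C n sM tM)) /\
  ((forall l l' : 'I_r, (l < l')%N -> iv_le (s l) (t l) (s l') (t l')) ->
   (forall i : 'I_N, nat_of_ord (typ i) = block_idx a i) ->
   (forall B, Pimg C n sM tM B <-> std_parabolic a B) /\
   [/\ forall B, std_levi a B -> LM typ (Psi C n sM tM (emb_inv C n sM B)),
       forall B B', std_levi a B -> std_levi a B' ->
         Psi C n sM tM (emb_inv C n sM B) = Psi C n sM tM (emb_inv C n sM B') -> B = B',
       forall g, LM typ g -> exists B, std_levi a B /\ Psi C n sM tM (emb_inv C n sM B) = g,
       forall B B', std_levi a B -> std_levi a B' ->
         Psi C n sM tM (emb_inv C n sM (B *m B'))
         = hcomp (Psi C n sM tM (emb_inv C n sM B)) (Psi C n sM tM (emb_inv C n sM B')) &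
       forall g, UM typ phi g <-> exists B, std_unip a B /\ Psi C n sM tM (emb_inv C n sM B) = g]).
Proof.
move=> sM tM M phi st_l st_inj a_gt0 card_typ _ phi_hom phi_supp phi_nz.
have stM i : (sM i <= tM i <= n)%N by have [/andP[_ ->] ->] := st_l (typ i).
have typ_surj l : exists i, typ i = l.
  have /card_gt0P[i] : (0 < #|[set i | typ i == l]|)%N by rewrite card_typ a_gt0.
  by rewrite inE => /eqP; exists i.
split.
  rewrite catenoid_total //; split=> [tot | par].
    exact: parabolic_of_total (PimgP stM) iv_rel_refl iv_rel_trans tot.
  by apply: total_of_parabolic iv_rel_refl _ par => B /(Pimg_supp stM).
move=> st_ord typ_block.
have ivM_typ i j : iv_rel sM tM i j = (typ i <= typ j)%N := iv_rel_typ st_inj st_ord i j.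
have typ_mono (i j : 'I_N) : (i <= j)%N -> (typ i <= typ j)%N.
  by rewrite !typ_block; apply: block_idx_mono.
have leviE := std_leviE typ_block; have unipE := std_unipE typ_block.
split=> [B | ].
  exact: iff_trans (PimgE stM ivM_typ B) (iff_sym (std_parabolicE typ_block B)).
split.
- by move=> B /leviE; apply: Psi_levi.
- by move=> B B' /leviE lB /leviE lB'; apply: Psi_levi_inj.
- by move=> g /(Psi_levi_surj stM ivM_typ)[B [/leviE lB <-]]; exists B.
- by move=> B B' /leviE lB /leviE lB'; apply: Psi_leviM.
move=> g; apply: iff_trans (UM_unitri ivM_typ typ_mono phi_hom phi_supp phi_nz g) _.
split=> -[B [uB <-]]; exists B.
  by rewrite (Psi_emb_invE stM); [split=> //; apply/unipE | exact: (unitri_typ_iv ivM_typ uB)].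
by move/unipE: uB => uB; rewrite (Psi_emb_invE stM) //; exact: (unitri_typ_iv ivM_typ uB).
Qed.
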